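(* Consider the multivariate multiple linear regression model $\mathbf{Y} = \mathbf{X}\boldsymbol{\beta}' + \boldsymbol{\mathcal{E}}$ with $K=2$ traits, where $\mathbf{Y}$ is an $n\times 2$ matrix of traits, $\mathbf{X}$ is an $n\times1$ genotype vector, $\boldsymbol{\beta}'=(\beta_1,\beta_2)$, and $\mathrm{vec}(\boldsymbol{\mathcal{E}})\sim N_{2n}(\mathbf{0},\mathbf{I}_n\otimes\boldsymbol{\Sigma})$ with $\boldsymbol{\Sigma}=\sigma^2\big((1-\rho)\mathbf{I}_2+\rho\mathbf{1}\mathbf{1}'\big)$, $\sigma^2>0$, and within-trait correlation $\rho$ (not necessarily positive) such that $\boldsymbol{\Sigma}$ is positive definite. The genetic effects need not be equal in size or in the same direction. For testing $H_0:\beta_1=\beta_2=0$ with the MANOVA test, the power when only one trait is associated (effects $(\beta_1,0)$) is asymptotically larger than the power when both traits are associated (effects $(\beta_1,\beta_2)$) if $0<\beta_2<2\rho\beta_1$ or $0>\beta_2>2\rho\beta_1$.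
   Context: $\mathbf{Y}$ and $\mathbf{X}$ are centered. The MANOVA test (Wilks' lambda, equivalent to the likelihood ratio test under the model) of $H_0:\boldsymbol{\beta}=\mathbf{0}$ uses the statistic $-n\log\big(|\mathbf{E}|/|\mathbf{H}+\mathbf{E}|\big)$, where $\hat{\boldsymbol{\beta}}=\mathbf{Y}'\mathbf{X}(\mathbf{X}'\mathbf{X})^{-1}$, $\mathbf{H}=\hat{\boldsymbol{\beta}}(\mathbf{X}'\mathbf{X})\hat{\boldsymbol{\beta}}'$ and $\mathbf{E}=\mathbf{Y}'\mathbf{Y}-\hat{\boldsymbol{\beta}}(\mathbf{X}'\mathbf{X})\hat{\boldsymbol{\beta}}'$; under $H_0$ it is approximately $\chi^2_2$ for large $n$, and the test rejects for large values. ''Asymptotically'' refers to the large-sample ($n\to\infty$) approximation of the power. *)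

From HB Require Import structures.
From mathcomp Require Import all_boot all_order all_algebra.
From mathcomp Require Import all_classical all_reals all_analysis.
Set Implicit Arguments. Unset Strict Implicit. Unset Printing Implicit Defensive.
Import Order.TTheory GRing.Theory Num.Theory.
Local Open Scope ring_scope.

Definition exch_cov {R : realType} (sigma2 rho : R) : 'M[R]_2 :=
  sigma2 *: ((1 - rho) *: 1%:M + rho *: const_mx 1).

Definition posdef {R : realType} (n : nat) (S : 'M[R]_n) : Prop :=
  S^T = S /\ forall v : 'cV[R]_n, v != 0 -> 0 < (v^T *m S *m v) ord0 ord0.

Definition effect2 {R : realType} (b1 b2 : R) : 'cV[R]_2 :=
  \col_(i < 2) (if i == ord0 then b1 else b2).

(* Noncentrality parameter of the asymptotic (noncentral chi^2_2) distribution
   of the MANOVA / LRT statistic -n log(|E|/|H+E|) for centered X: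
   lambda = (X'X) * beta' Sigma^{-1} beta. *)
Definition manova_noncentrality {R : realType} (n : nat) (X : 'cV[R]_n)
  (Sigma : 'M[R]_2) (beta : 'cV[R]_2) : R :=
  (X^T *m X) ord0 ord0 * (beta^T *m invmx Sigma *m beta) ord0 ord0.

(* P(chi^2_2(lambda) > c), where chi^2_2(lambda) = (Z1 + sqrt lambda)^2 + Z2^2
   with Z1, Z2 iid N(0,1). *)
Definition ncchi2_2_tail {R : realType} (lambda c : R) : \bar R :=
  ((normal_prob 0 1 \x normal_prob 0 1)%E
     [set z : R * R | c < (z.1 + Num.sqrt lambda) ^+ 2 + z.2 ^+ 2])%classic.

(* Asymptotic power of the level-alpha MANOVA test of H0 : beta = 0.
   The chi^2_2 upper alpha-quantile is -2 ln alpha. *)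
Definition manova_asymp_power {R : realType} (n : nat) (X : 'cV[R]_n)
  (Sigma : 'M[R]_2) (beta : 'cV[R]_2) (alpha : R) : \bar R :=
  ncchi2_2_tail (manova_noncentrality X Sigma beta) (- 2 * ln alpha).

(* With the exchangeable covariance the noncentrality of the MANOVA statistic is
   X'X (b1^2 - 2 rho b1 b2 + b2^2) / (sigma2 (1 - rho^2)), so a second effect b2
   lowers it exactly when b2 (b2 - 2 rho b1) < 0.  It remains to see that the
   chi^2_2(lambda) tail P((Z1 + sqrt lambda)^2 + Z2^2 > c) strictly increases with
   lambda.  Conditionally on Z2 = y this is P(|Z1 + sqrt lambda|^2 > c - y^2), and a
   standard normal puts less mass on an interval of fixed length the farther its
   center is from 0: the derivative of the mass in the center a is
   pdf (a + r) - pdf (a - r), positive for a < 0. *)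

From HB Require Import structures.
From mathcomp Require Import all_boot all_order all_algebra.
From mathcomp Require Import all_classical all_reals all_analysis.
From mathcomp Require Import ring lra measurable_realfun.

Set Implicit Arguments.
Unset Strict Implicit.
Unset Printing Implicit Defensive.

Import Order.TTheory GRing.Theory Num.Theory.
Local Open Scope ring_scope.

Lemma ord2P (i : 'I_2) : i = ord0 \/ i = ord_max.
Proof. by case: i => -[|[|//]] Hi; [left|right]; apply/val_inj. Qed.

Lemma sum_ord2 (V : nmodType) (f : 'I_2 -> V) : \sum_(i < 2) f i = f ord0 + f ord_max.
Proof. by rewrite !big_ord_recl big_ord0 addr0; congr (f _ + f _); apply/val_inj. Qed.

Lemma quadform2E (R : comPzRingType) (M : 'M[R]_2) (v : 'cV[R]_2) :
  (v^T *m M *m v) ord0 ord0 =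
  v ord0 ord0 * (M ord0 ord0 * v ord0 ord0 + M ord0 ord_max * v ord_max ord0)
  + v ord_max ord0 * (M ord_max ord0 * v ord0 ord0 + M ord_max ord_max * v ord_max ord0).
Proof. by rewrite -mulmxA !mxE sum_ord2 !mxE !sum_ord2. Qed.

Lemma trmx_mul_self_gt0 (R : realDomainType) n (X : 'cV[R]_n) :
  X != 0 -> 0 < (X^T *m X) ord0 ord0.
Proof.
move=> X0; rewrite mxE.
under eq_bigr => j _ do rewrite mxE -expr2.
rewrite lt_def sumr_ge0 ?andbT => [|i _]; last exact: sqr_ge0.
apply: contra X0 => /eqP /psumr_eq0P X20; apply/eqP/matrixP => i j.
rewrite (ord1 j) mxE; apply/eqP; rewrite -sqrf_eq0; apply/eqP/X20 => // k _.
exact: sqr_ge0.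
Qed.

Section ExchangeableCovariance.
Variables (R : realType) (s2 rho : R).

Lemma exch_covE (i j : 'I_2) :
  exch_cov s2 rho i j = s2 * (if i == j then 1 else rho).
Proof. by rewrite /exch_cov !mxE; case: (i == j) => /=; ring. Qed.

Lemma effect2E (b1 b2 : R) :
  effect2 b1 b2 ord0 ord0 = b1 /\ effect2 b1 b2 ord_max ord0 = b2.
Proof. by rewrite !mxE. Qed.

Lemma exch_cov_quadE (b1 b2 : R) :
  ((effect2 b1 b2)^T *m exch_cov s2 rho *m effect2 b1 b2) ord0 ord0 =
  s2 * (b1 ^+ 2 + 2 * rho * b1 * b2 + b2 ^+ 2).
Proof. by rewrite quadform2E !exch_covE; have [-> ->] := effect2E b1 b2; rewrite /=; ring. Qed.

Lemma posdef_exch_cov_rho : posdef (exch_cov s2 rho) -> rho ^+ 2 < 1.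
Proof.
move=> [_ pos].
have effect2_neq0 (b2 : R) : effect2 1 b2 != 0.
  by apply/eqP => /matrixP/(_ ord0 ord0) /eqP; rewrite !mxE oner_eq0.
have := pos _ (effect2_neq0 1); have := pos _ (effect2_neq0 (-1)).
rewrite !exch_cov_quadE; nra.
Qed.

Hypothesis rho_lt1 : rho ^+ 2 < 1.
Hypothesis s2_gt0 : 0 < s2.

Lemma invmx_exch_covE (i j : 'I_2) :
  invmx (exch_cov s2 rho) i j =
  (s2 * (1 - rho ^+ 2))^-1 * (if i == j then 1 else - rho).
Proof.
pose P : 'M[R]_2 := \matrix_(i, j) ((s2 * (1 - rho ^+ 2))^-1 * (if i == j then 1 else - rho)).
have P_rinv : exch_cov s2 rho *m P = 1%:M.
  apply/matrixP => k l; rewrite [LHS]mxE sum_ord2 !exch_covE !mxE.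
  by case: (ord2P k) => ->; case: (ord2P l) => -> /=; field; rewrite !gt_eqF ?subr_gt0.
have [unit_cov _] := mulmx1_unit P_rinv.
suff -> : invmx (exch_cov s2 rho) = P by rewrite mxE.
by rewrite -[RHS]mul1mx -(mulVmx unit_cov) -mulmxA P_rinv mulmx1.
Qed.

Lemma invmx_exch_cov_quadE (b1 b2 : R) :
  ((effect2 b1 b2)^T *m invmx (exch_cov s2 rho) *m effect2 b1 b2) ord0 ord0 =
  (b1 ^+ 2 - 2 * rho * b1 * b2 + b2 ^+ 2) / (s2 * (1 - rho ^+ 2)).
Proof.
rewrite quadform2E !invmx_exch_covE; have [-> ->] := effect2E b1 b2 => /=.
by field; rewrite !gt_eqF ?subr_gt0.
Qed.

End ExchangeableCovariance.

Section IntegralPositivity.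
Local Open Scope ereal_scope.
Context d (T : measurableType d) (R : realType) (mu : {measure set T -> \bar R}).

Lemma integral_gt0 (D : set T) (f : T -> \bar R) :
  measurable D -> measurable_fun D f -> 0 < mu D ->
  (forall x, D x -> 0 < f x) -> 0 < \int[mu]_(x in D) f x.
Proof.
move=> mD mf muD0 f_gt0.
rewrite lt_def integral_ge0 ?andbT => [|x Dx]; last exact/ltW/f_gt0.
apply/negP => /eqP int0.
have : \int[mu]_(x in D) `|f x| = 0.
  by rewrite -int0; apply: eq_integral => x /[1!inE] Dx; rewrite gee0_abs ?ltW ?f_gt0.
move/(ae_eq_integral_abs mu mD mf) => [N [mN N0 subN]].
suff : mu D = 0 by move=> muD; rewrite muD ltxx in muD0.
apply: (subset_measure0 mD mN) => // x Dx; apply: subN => /= f0.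
by have := f_gt0 x Dx; rewrite f0 ?ltxx.
Qed.

Lemma ge0_lt_integral (D : set T) (f g : T -> \bar R) :
  measurable D -> measurable_fun setT f -> measurable_fun setT g ->
  (forall x, 0 <= f x) -> (forall x, f x \is a fin_num) -> (forall x, f x <= g x) ->
  \int[mu]_x g x < +oo -> 0 < mu D -> (forall x, D x -> f x < g x) ->
  \int[mu]_x f x < \int[mu]_x g x.
Proof.
move=> mD mf mg f0 f_fin fg intg_lty muD0 Dfg.
have mgf : measurable_fun setT (fun x => g x - f x) := emeasurable_funB mg mf.
have gf0 x : 0 <= g x - f x by rewrite sube_ge0 ?fg ?f_fin.
have -> : \int[mu]_x g x = \int[mu]_x f x + \int[mu]_x (g x - f x).
  by rewrite -ge0_integralD //; apply: eq_integral => x _; rewrite addeC subeK.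
have intf_fin : \int[mu]_x f x \is a fin_num.
  rewrite ge0_fin_numE ?integral_ge0 //; apply: le_lt_trans intg_lty.
  by apply: ge0_le_integral.
rewrite lteDl //; apply: (@lt_le_trans _ _ (\int[mu]_(x in D) (g x - f x))).
  apply: integral_gt0 => // [|x Dx]; first exact: measurable_funTS.
  by rewrite sube_gt0 Dfg.
exact: ge0_subset_integral.
Qed.

End IntegralPositivity.

Section StandardNormal.
Local Open Scope classical_set_scope.
Variable R : realType.
Local Notation mu := (@lebesgue_measure R).
Local Notation N := (normal_prob (0 : R) 1).
Local Notation pdf := (normal_pdf (0 : R) 1).

Lemma std_normal_pdf_gt0 (x : R) : 0 < pdf x.
Proof.
by rewrite normal_pdfE ?oner_eq0 // mulr_gt0 ?expR_gt0 ?normal_peak_gt0 ?oner_eq0.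
Qed.

Lemma std_normal_pdf_lt (x y : R) : x ^+ 2 < y ^+ 2 -> pdf y < pdf x.
Proof.
move=> xy; rewrite !normal_pdfE ?oner_eq0 //.
rewrite ltr_pM2l ?normal_peak_gt0 ?oner_eq0 // ltr_expR /normal_fun !subr0.
by rewrite ltr_pM2r ?invr_gt0 ?mulrn_wgt0 ?expr1n // ltrN2.
Qed.

Lemma integrable_std_normal_pdf (A : set R) :
  measurable A -> mu.-integrable A (EFin \o pdf).
Proof. by move=> mA; apply: integrableS (integrable_normal_pdf 0 1). Qed.

Definition std_normal_cdf (x : R) : R := (\int[mu]_(t in `]-oo, x]) pdf t)%R.

Lemma std_normal_cdf_is_derive (x : R) : is_derive x 1 std_normal_cdf (pdf x).
Proof.
have x_lt : x < x + 1 by rewrite ltrDl ltr01.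
have [derF <-] : derivable std_normal_cdf x 1 /\ std_normal_cdf^`()%classic x = pdf x.
  apply: (@continuous_FTC1 R pdf -oo%O x (x + 1) x_lt).
  - exact: integrable_std_normal_pdf.
  - by rewrite ltNyr.
  - by apply: continuous_normal_pdf; rewrite oner_eq0.
by rewrite derive1E; apply: derivableP.
Qed.

Lemma std_normal_prob_itv_cc (u v : R) : u <= v ->
  N `[u, v] = (std_normal_cdf v - std_normal_cdf u)%:E.
Proof.
move=> uv; rewrite /std_normal_cdf Rintegral_itvB ?integrable_std_normal_pdf //=.
rewrite Rintegral_itv_obnd_cbnd ?integrable_std_normal_pdf // fineK //.
exact: (fin_num_measure N).
Qed.

Definition std_normal_ball (a r : R) : R :=
  std_normal_cdf (a + r) - std_normal_cdf (a - r).

Lemma std_normal_ball_is_derive (a r : R) :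
  is_derive a 1 (std_normal_ball ^~ r) (pdf (a + r) - pdf (a - r)).
Proof.
have shift (t : R) : is_derive a 1 (std_normal_cdf \o (fun x => x + t)) (pdf (a + t)).
  rewrite -[pdf _]mulr1; apply: is_derive1_comp; last exact: is_derive_shift.
  exact: std_normal_cdf_is_derive.
exact: is_deriveB (shift r) (shift (- r)).
Qed.

Lemma std_normal_ball_lt (r a b : R) : 0 < r -> a < b <= 0 ->
  std_normal_ball a r < std_normal_ball b r.
Proof.
move=> r_gt0 /andP[ab b_le0].
have der x : derivable (std_normal_ball ^~ r) x 1.
  by have [] := std_normal_ball_is_derive x r.
apply: (@gtr0_derive1_lt_cc _ (std_normal_ball ^~ r) a b); rewrite ?in_itv /= ?lexx ?(ltW ab) //.
- move=> x /[!in_itv] /andP[_ xb].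
  have ball_der := std_normal_ball_is_derive x r.
  rewrite derive1E derive_val subr_gt0.
  have x_lt0 : x < 0 := lt_le_trans xb b_le0.
  apply: std_normal_pdf_lt; rewrite -subr_gt0.
  have -> : (x - r) ^+ 2 - (x + r) ^+ 2 = 4 * r * - x by ring.
  by rewrite !mulr_gt0 ?oppr_gt0.
- by apply: derivable_within_continuous => x _; exact: der.
Qed.

Definition sqr_shift_gt (s e : R) : set R := [set z | e < (z + s) ^+ 2].

Lemma measurable_sqr_shift_gt (s e : R) : measurable (sqr_shift_gt s e).
Proof.
have mf : measurable_fun [set: R] (fun z => (z + s) ^+ 2).
  by apply: measurable_funX; apply: measurable_funD.
have := mf measurableT `]e, +oo[ (measurable_itv _).
by rewrite setTI; congr measurable; apply/seteqP; split => z /=; rewrite in_itv /= andbT.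
Qed.

Lemma std_normal_sqr_shift_gtE (s e : R) : 0 <= e ->
  N (sqr_shift_gt s e) = (1 - std_normal_ball (- s) (Num.sqrt e))%:E.
Proof.
move=> e_ge0; have := sqr_sqrtr e_ge0; have := sqrtr_ge0 e.
set r := Num.sqrt e => r_ge0 r2.
have -> : sqr_shift_gt s e = ~` `[- s - r, - s + r].
  rewrite /sqr_shift_gt -r2; apply/seteqP; split => z /=; rewrite in_itv /=.
    by move=> lt_sq /andP[? ?]; nra.
  by move/negP; rewrite negb_and -!ltNge => /orP[] ?; nra.
transitivity (1 - N `[(- s - r)%R, (- s + r)%R])%E; first exact: probability_setC.
by rewrite std_normal_prob_itv_cc -?EFinB //; lra.
Qed.

Lemma std_normal_sqr_shift_gt1 (s e : R) : e < 0 -> N (sqr_shift_gt s e) = 1%E.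
Proof.
move=> e_lt0; rewrite -(probability_setT N); congr N.
by apply/seteqP; split => // z _; exact: lt_le_trans e_lt0 (sqr_ge0 _).
Qed.

Lemma std_normal_sqr_shift_gt_lt (s0 s1 e : R) : 0 < e -> 0 <= s0 -> s0 < s1 ->
  (N (sqr_shift_gt s0 e) < N (sqr_shift_gt s1 e))%E.
Proof.
move=> e_gt0 s0_ge0 s01.
rewrite !std_normal_sqr_shift_gtE ?ltW // lte_fin ltrD2l ltrN2.
by apply: std_normal_ball_lt; rewrite ?sqrtr_gt0 // ltrN2 oppr_le0 s01.
Qed.

Lemma std_normal_sqr_shift_gt_le (s0 s1 e : R) : 0 <= s0 -> s0 <= s1 ->
  (N (sqr_shift_gt s0 e) <= N (sqr_shift_gt s1 e))%E.
Proof.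
move=> s0_ge0; rewrite le_eqVlt => /orP[/eqP <- // | s01].
have [e_lt0|] := ltP e 0; first by rewrite !std_normal_sqr_shift_gt1.
rewrite le_eqVlt => /orP[/eqP e0|e_gt0]; last exact/ltW/std_normal_sqr_shift_gt_lt.
by rewrite -e0 !std_normal_sqr_shift_gtE // /std_normal_ball sqrtr0 !addr0 !subr0 !subrr.
Qed.

Lemma std_normal_itv_oo_gt0 (a : R) : 0 < a -> (0 < N `](- a)%R, a[)%E.
Proof.
move=> a_gt0; apply: integral_gt0 => //.
- by apply/measurable_EFinP/measurable_funTS; exact: measurable_normal_pdf.
- suff : (0 < (@lebesgue_measure R) `](- a)%R, a[)%E by [].
  by rewrite lebesgue_measure_itv /= lte_fin gtrN //= -EFinB lte_fin opprK addr_gt0.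
- by move=> x _; rewrite lte_fin std_normal_pdf_gt0.
Qed.
End StandardNormal.

Section NoncentralChiSquare2.
Local Open Scope classical_set_scope.
Variable R : realType.
Local Notation T := (measurableTypeR R).
Local Notation N := (normal_prob (0 : R) 1).

Definition ncchi2_2_event (s c : R) : set (T * T) :=
  [set z | c < (z.1 + s) ^+ 2 + z.2 ^+ 2].

Lemma measurable_ncchi2_2_event (s c : R) : measurable (ncchi2_2_event s c).
Proof.
have mfst : measurable_fun [set: T * T] (fun z : T * T => z.1) := measurable_fst.
have msnd : measurable_fun [set: T * T] (fun z : T * T => z.2) := measurable_snd.
have mf : measurable_fun [set: T * T] (fun z : T * T => (z.1 + s) ^+ 2 + z.2 ^+ 2).
  by apply: measurable_funD; apply: measurable_funX => //; apply: measurable_funD.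
have := mf measurableT `]c, +oo[ (measurable_itv _).
by rewrite setTI; congr measurable; apply/seteqP; split => z /=; rewrite in_itv /= andbT.
Qed.

Lemma ysection_ncchi2_2_event (s c : R) (y : T) :
  ysection (ncchi2_2_event s c) y = sqr_shift_gt s (c - y ^+ 2).
Proof.
by apply/seteqP; split => x; rewrite /ysection /sqr_shift_gt /= inE /= ltrBlDr.
Qed.

Lemma ncchi2_2_tailE (lambda c : R) : ncchi2_2_tail lambda c =
  (\int[N]_y N (sqr_shift_gt (Num.sqrt lambda) (c - y ^+ 2)))%E.
Proof.
rewrite /ncchi2_2_tail -/(ncchi2_2_event (Num.sqrt lambda) c).
rewrite (@product_measure_unique _ _ _ _ _ _ _ (N \x^ N)%E).
- by apply: eq_integral => y _ /=; rewrite ysection_ncchi2_2_event.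
- by move=> A B mA mB; exact: product_measure2E.
- exact: measurable_ncchi2_2_event.
Qed.

Lemma ncchi2_2_tail_lt (l0 l1 c : R) : 0 < c -> 0 <= l0 -> l0 < l1 ->
  (ncchi2_2_tail l0 c < ncchi2_2_tail l1 c)%E.
Proof.
move=> c_gt0 l0_ge0 l01.
have sqrt_ge0 := sqrtr_ge0 l0.
have sqrt_lt : Num.sqrt l0 < Num.sqrt l1 by rewrite ltr_sqrt // (le_lt_trans l0_ge0).
have mtail s : measurable_fun [set: T] (fun y : T => N (sqr_shift_gt s (c - y ^+ 2))).
  have := measurable_fun_ysection N (measurable_ncchi2_2_event s c).
  by congr measurable_fun; apply/funext => y /=; rewrite ysection_ncchi2_2_event.
rewrite !ncchi2_2_tailE.
apply: (@ge0_lt_integral _ _ _ N `](- Num.sqrt c)%R, Num.sqrt c[) => //.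
- by move=> y; apply: (fin_num_measure N); exact: measurable_sqr_shift_gt.
- by move=> y; apply: std_normal_sqr_shift_gt_le (ltW sqrt_lt).
- apply: (@le_lt_trans _ _ (\int[N]_y (cst 1%E y))%E).
    apply: ge0_le_integral => // y _; apply: probability_le1.
    exact: measurable_sqr_shift_gt.
  by rewrite integral_cst //= mul1e probability_setT ltry.
- by apply: std_normal_itv_oo_gt0; rewrite sqrtr_gt0.
- move=> y /=; rewrite in_itv /= => /andP[y_gt y_lt].
  apply: std_normal_sqr_shift_gt_lt sqrt_ge0 sqrt_lt.
  rewrite -[c in 0 < c - _](sqr_sqrtr (ltW c_gt0)) subr_sqr.
  by apply: mulr_gt0; lra.
Qed.
End NoncentralChiSquare2.

Theorem theorem2 (R : realType) (n : nat) (X : 'cV[R]_n)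
  (sigma2 rho b1 b2 alpha : R) :
  0 < sigma2 ->
  posdef (exch_cov sigma2 rho) ->
  \sum_(i < n) X i ord0 = 0 ->
  X != 0 ->
  0 < alpha < 1 ->
  (0 < b2 < 2 * rho * b1 \/ 2 * rho * b1 < b2 < 0) ->
  (manova_asymp_power X (exch_cov sigma2 rho) (effect2 b1 b2) alpha
   < manova_asymp_power X (exch_cov sigma2 rho) (effect2 b1 0) alpha)%E.
Proof.
(* Centering X does not affect the asymptotic power, which only involves X'X. *)
move=> sigma2_gt0 pd _ X_neq0 /andP[alpha_gt0 alpha_lt1] hb.
have rho2_lt1 := posdef_exch_cov_rho pd.
have XX_gt0 := trmx_mul_self_gt0 X_neq0.
have det_gt0 : 0 < sigma2 * (1 - rho ^+ 2) by rewrite mulr_gt0 // subr_gt0.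
rewrite /manova_asymp_power /manova_noncentrality !invmx_exch_cov_quadE //.
apply: ncchi2_2_tail_lt.
- by rewrite mulNr oppr_gt0 pmulr_rlt0 // ln_lt0 // alpha_gt0.
- apply: mulr_ge0 (ltW XX_gt0) (divr_ge0 _ (ltW det_gt0)).
  have -> : b1 ^+ 2 - 2 * rho * b1 * b2 + b2 ^+ 2
          = (b1 - rho * b2) ^+ 2 + (1 - rho ^+ 2) * b2 ^+ 2 by ring.
  by rewrite addr_ge0 ?sqr_ge0 // mulr_ge0 ?sqr_ge0 // subr_ge0 ltW.
- rewrite ltr_pM2l // ltr_pM2r ?invr_gt0 // mulr0 subr0 expr0n addr0 -subr_lt0.
  have -> : b1 ^+ 2 - 2 * rho * b1 * b2 + b2 ^+ 2 - b1 ^+ 2 = b2 * (b2 - 2 * rho * b1)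
    by ring.
  case: hb => /andP[lb ub].
  + by rewrite pmulr_rlt0 // subr_lt0.
  + by rewrite nmulr_rlt0 // subr_gt0.
Qed.
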